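(* Let $k$ be an algebraically closed field, $Q$ a finite acyclic quiver, and $M = (M_v, \varphi_a)_{v\in Q_0, a \in Q_1}$ a representation of $Q$ over $k$ of total dimension $n$ which is a brick, and let $w \in Q_0$ with $\dim_k M_w = m > 1$. Let $Q'$ be the quiver with $Q'_0 = Q_0 \cup \{w'\}$ ($w'$ a new vertex), $Q'_1 = Q_1 \cup \{e'\}$, where $s(e') = w'$, $t(e') = w$, and all arrows of $Q$ keep their source and target. Fix a basis of $\bigoplus_v M_v$ in which the first $m$ basis vectors span $M_w$, and let $f: kQ \to M_n(k)$ be the resulting homomorphism giving the action of $kQ$ on $M$. Then the $k$-algebra homomorphism $g: kQ' \to M_{n+1}(k\langle x_1,\dots,x_{m-1}\rangle)$ determined by $$g(a) = \begin{pmatrix} f(a) & 0 \\ 0 & 0\end{pmatrix} \ (a \in kQ),\quad g(e_{w'}) = \begin{pmatrix} 0 & 0 \\ 0 & 1 \end{pmatrix},\quad g(e') = \begin{pmatrix} 0 & X \\ 0 & 0 \end{pmatrix},$$ where $X = (1, x_1, \dots, x_{m-1}, 0, \dots, 0)^T$ is a column of length $n$, is a ring epimorphism.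
   Context: A representation is a brick if its endomorphism ring is $k$. $k\langle x_1,\dots,x_{m-1}\rangle$ is the free associative $k$-algebra. A ring homomorphism $\varphi: R \to S$ is a ring epimorphism if for any two ring homomorphisms $\varrho_1, \varrho_2: S \to T$ with $\varrho_1\varphi = \varrho_2\varphi$ one has $\varrho_1 = \varrho_2$. Arrows act by matrices supported in the (rows of the target vertex, columns of the source vertex) block. *)

From HB Require Import structures.
From mathcomp Require Import all_boot all_order all_algebra.
From mathcomp Require Import monalg.

Set Implicit Arguments.
Unset Strict Implicit.
Unset Printing Implicit Defensive.

Import GRing.Theory.
Local Open Scope ring_scope.

Definition quiver_rel (V E : finType) (src tgt : E -> V) : rel V :=
  fun u v => [exists a : E, (src a == u) && (tgt a == v)].

Definition acyclic_quiver (V E : finType) (src tgt : E -> V) : Prop :=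
  forall a : E, ~~ connect (quiver_rel src tgt) (tgt a) (src a).

(* Representations, written in a basis adapted to the decomposition     *)
(* M = (+)_v M_v: basis vector i : 'I_n lies in M_(blk i).  Arrows act  *)
(* (on column vectors) by n x n matrices supported in the block         *)
(* (rows of tgt a) x (columns of src a).                                *)

Definition rep_matrices (k : fieldType) (V E : finType) (src tgt : E -> V)
    (n : nat) (blk : 'I_n -> V) (A : E -> 'M[k]_n) : Prop :=
  forall (a : E) (i j : 'I_n), A a i j != 0 -> blk i = tgt a /\ blk j = src a.

(* the idempotent e_v acts as the projection onto M_v *)
Definition vertex_mx (k : fieldType) (V : finType) (n : nat) (blk : 'I_n -> V)
    (v : V) : 'M[k]_n :=
  \matrix_(i, j) ((i == j) && (blk i == v))%:R.

(* endomorphisms of the representation: families (h_v : M_v -> M_v)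
   i.e. block-diagonal matrices, commuting with all arrows *)
Definition rep_endo (k : fieldType) (V E : finType) (n : nat)
    (blk : 'I_n -> V) (A : E -> 'M[k]_n) (H : 'M[k]_n) : Prop :=
  (forall i j : 'I_n, blk i != blk j -> H i j = 0) /\
  (forall a : E, H *m A a = A a *m H).

Definition is_brick (k : fieldType) (V E : finType) (n : nat)
    (blk : 'I_n -> V) (A : E -> 'M[k]_n) : Prop :=
  forall H : 'M[k]_n, rep_endo blk A H -> exists c : k, H = c%:M.

(* Image of an algebra map out of a path algebra kQ, given by the       *)
(* images gv v of the trivial paths e_v and ge a of the arrows.         *)
(* A path is a start vertex v and a sequence of arrows a1 ... ar        *)
(* (a1 first) with src a1 = v and tgt a_i = src a_(i+1); paths form a   *)
(* k-basis of kQ, so the image of the map is the k-span of the images   *)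
(* of paths.                                                            *)

Fixpoint qpath_ok (V E : eqType) (src tgt : E -> V) (v : V) (s : seq E) : bool :=
  if s is a :: s' then (src a == v) && qpath_ok src tgt (tgt a) s' else true.

(* image of a path: trivial path e_v |-> gv v; a1 ... ar |-> ge ar * ... * ge a1
   (composition of maps acting on column vectors) *)
Definition path_img (V E : Type) (S : pzRingType) (gv : V -> S) (ge : E -> S)
    (v : V) (s : seq E) : S :=
  if s is [::] then gv v else foldr (fun a acc => acc * ge a) 1 s.

Definition path_alg_image (k : fieldType) (V E : eqType) (src tgt : E -> V)
    (S : pzRingType) (emb : k -> S) (gv : V -> S) (ge : E -> S) (x : S) : Prop :=
  exists ps : seq (k * (V * seq E)),
    all (fun p => qpath_ok src tgt p.2.1 p.2.2) ps /\
    x = \sum_(p <- ps) emb p.1 * path_img gv ge p.2.1 p.2.2.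

(* g : R -> S is a ring epimorphism; stated through the image of g:
   r1 \o g = r2 \o g  iff  r1, r2 agree on the image of g *)
Definition ring_epi_image (S : pzRingType) (img : S -> Prop) : Prop :=
  forall (T : pzRingType) (r1 r2 : {rmorphism S -> T}),
    (forall x, img x -> r1 x = r2 x) -> forall y, r1 y = r2 y.

(* The free associative algebra k<x_1, ..., x_(m-1)>: the monoid        *)
(* algebra of the free monoid on 'I_(m.-1).  The variable x_(j+1) is    *)
(* << fmu j >> for j : 'I_(m.-1).                                       *)

Definition free_alg (k : fieldType) (m : nat) := {malg k[{fmonom 'I_(m.-1)}]}.

(* the variable x_j (1 <= j <= m-1); 0 for other j *)
Definition fvar (k : fieldType) (m : nat) (j : nat) : free_alg k m :=
  match @insub nat (fun t => t < m.-1)%N _ j.-1 with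
  | Some o => if (0 < j)%N then << fmu o >> else 0
  | None => 0
  end.

Definition Xcol (k : fieldType) (m n : nat) : 'M[free_alg k m]_(n, 1) :=
  \matrix_(i, j) (if (i : nat) == 0%N then 1
                  else if (i < m)%N then fvar k m i else 0).

Definition fconst (k : fieldType) (m : nat) (c : k) : free_alg k m := c%:MP.

(* Q' : vertices option V (None = w'), arrows option E (None = e') *)
Definition src' (V E : Type) (src : E -> V) (a : option E) : option V :=
  if a is Some b then Some (src b) else None.
Definition tgt' (V E : Type) (tgt : E -> V) (w : V) (a : option E) : option V :=
  if a is Some b then Some (tgt b) else Some w.

Definition g_vertex (k : fieldType) (V : finType) (m n : nat) (blk : 'I_n -> V)
    (v : option V) : 'M[free_alg k m]_(n + 1) :=
  if v is Some u then block_mx (map_mx (@fconst k m) (vertex_mx k blk u)) 0 0 0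
  else block_mx 0 0 0 1.

Definition g_arrow (k : fieldType) (V E : finType) (m n : nat)
    (A : E -> 'M[k]_n) (a : option E) : 'M[free_alg k m]_(n + 1) :=
  if a is Some b then block_mx (map_mx (@fconst k m) (A b)) 0 0 0
  else block_mx 0 (Xcol k m n) 0 0.

Definition g_scalar (k : fieldType) (m n : nat) (c : k) : 'M[free_alg k m]_(n + 1) :=
  (fconst m c)%:M.

From HB Require Import structures.
From mathcomp Require Import all_boot all_order all_algebra.
From mathcomp Require Import monalg.

Set Implicit Arguments.
Unset Strict Implicit.
Unset Printing Implicit Defensive.

Import GRing.Theory.
Local Open Scope ring_scope.

(* Since M is a brick, the centraliser of the image B of kQ in M_n(k) is k.
   Dually, the trace-zero matrices are spanned by the commutators [E_pq, b]
   with b in B, so M_n(k) (x)_B M_n(k) = M_n(k): two ring maps out of M_n(k)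
   that agree on B and on the scalars agree everywhere.  Hence two ring maps
   out of M_(n+1)(k<x>) that agree on the image of g agree on the corner
   M_n(k), on E_(w'w') = g(e_w') and on E_(1w') = E_11 g(e') E_(w'w'); the
   zigzag E_(w'1) = E_(w'1) E_(1w') E_(w'1) then gives all matrix units, and
   x_j = sum_a E_(a,j+1) g(e') E_(w'a) gives the scalar matrices x_j, which
   together with k generate k<x>. *)

Section Equalizer.
Variables (R T : pzRingType) (f g : {rmorphism R -> T}).

Definition equalizer : {pred R} := [pred x | f x == g x].

Lemma equalizer_subring_closed : subring_closed equalizer.
Proof.
split=> [|x y|x y]; rewrite !inE ?rmorph1 // => /eqP fg_x /eqP fg_y.
  by rewrite !rmorphB fg_x fg_y.
by rewrite !rmorphM fg_x fg_y.
Qed.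

Lemma equalizer_zigzag (y q : R) : y * q * y = y ->
    q \in equalizer -> y * q \in equalizer -> q * y \in equalizer ->
  y \in equalizer.
Proof.
move=> yqy; rewrite !inE => /eqP fg_q /eqP fg_yq /eqP fg_qy; apply/eqP.
have fy : f y = f y * g (q * y) by rewrite -fg_qy -rmorphM mulrA yqy.
have gy : g y = f (y * q) * g y by rewrite fg_yq -rmorphM yqy.
by rewrite fy gy rmorphM mulrA -fg_q -rmorphM.
Qed.

End Equalizer.

HB.instance Definition _ (R T : pzRingType) (f g : {rmorphism R -> T}) :=
  GRing.isSubringClosed.Build R (equalizer f g) (equalizer_subring_closed f g).

Section MatrixUnits.
Variable R : pzRingType.

Lemma delta_mx_sandwich N (p q r s : 'I_N) (M : 'M[R]_N) :
  delta_mx p q *m M *m delta_mx r s = M q r *: delta_mx p s.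
Proof.
apply/matrixP => i j; rewrite !mxE (bigD1 r) //= big1 ?addr0; last first.
  by move=> l /negPf nl; rewrite [delta_mx r s l j]mxE nl mulr0.
rewrite [delta_mx r s r j]mxE eqxx /= mxE (bigD1 q) //= big1 ?addr0; last first.
  by move=> l /negPf nl; rewrite [delta_mx p q i l]mxE nl andbF mul0r.
rewrite [delta_mx p q i q]mxE eqxx andbT.
by case: (i == p); case: (j == s); rewrite ?mul1r ?mul0r ?mulr1 ?mulr0.
Qed.

Lemma sum_delta_mx_sandwich N (q r : 'I_N) (M : 'M[R]_N) :
  \sum_(a < N) delta_mx a q *m M *m delta_mx r a = (M q r)%:M.
Proof.
rewrite scalar_mx_sum_delta.
by apply: eq_bigr => a _; rewrite delta_mx_sandwich.
Qed.

Lemma mulmx_delta_mx N (M : 'M[R]_N) (i j : 'I_N) :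
  M *m delta_mx i j = \sum_(l < N) M l i *: delta_mx l j.
Proof.
rewrite -{1}[M]mul1mx mx1_sum_delta !mulmx_suml.
by apply: eq_bigr => l _; rewrite delta_mx_sandwich.
Qed.

Lemma delta_mx_mulmx N (M : 'M[R]_N) (i j : 'I_N) :
  delta_mx i j *m M = \sum_(l < N) M j l *: delta_mx i l.
Proof.
rewrite -{1}[M]mulmx1 mx1_sum_delta !mulmx_sumr.
by apply: eq_bigr => l _; rewrite mulmxA delta_mx_sandwich.
Qed.

Lemma mxtrace_delta N (p q : 'I_N) : \tr (delta_mx p q : 'M[R]_N) = (p == q)%:R.
Proof.
rewrite /mxtrace (bigD1 p) //= big1 ?addr0 ?mxE ?eqxx //=.
by move=> i /negPf ni; rewrite mxE ni.
Qed.

Lemma mxtrace_delta_mul N (p q : 'I_N) (M : 'M[R]_N) :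
  \tr (delta_mx p q *m M) = M q p.
Proof.
rewrite delta_mx_mulmx raddf_sum (bigD1 p) //= big1 ?addr0.
  by rewrite mxtraceZ mxtrace_delta eqxx mulr1.
by move=> l /negPf pl; rewrite mxtraceZ mxtrace_delta eq_sym pl mulr0.
Qed.

End MatrixUnits.

Section MatrixDominion.
Variables (k : fieldType) (n : nat) (I : finType) (B : I -> 'M[k]_n).

Definition unit_commutator (t : I * ('I_n * 'I_n)) : 'M[k]_n :=
  delta_mx t.2.1 t.2.2 *m B t.1 - B t.1 *m delta_mx t.2.1 t.2.2.

Lemma mxvec_mul_trace (Y : 'M[k]_n) p (z : 'M[k]_(n * n, p)) c :
  (mxvec Y *m z) 0 c = \tr (Y *m \matrix_(a, b) z (mxvec_index b a) c).
Proof.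
rewrite mxE (reindex _ (curry_mxvec_bij _ _)) /mxtrace.
under [RHS]eq_bigr do rewrite mxE.
by rewrite pair_bigA; apply: eq_bigr => [[a b]] _; rewrite mxvecE mxE.
Qed.

Hypothesis centraliser_scalar : forall Z : 'M[k]_n,
  (forall i, Z *m B i = B i *m Z) -> exists c : k, Z = c%:M.

(* A linear form killing every [unit_commutator] is [Y |-> \tr (Y *m Z)] with
   [Z] in the centraliser of [B], hence a multiple of the trace. *)
Lemma trace0_commutator_combination W : \tr W = 0 ->
  exists u : I * ('I_n * 'I_n) -> k, W = \sum_t u t *: unit_commutator t.
Proof.
move=> trW0.
suff /sub_sums_genmxP[u Wu] :
    (mxvec W <= \sum_t <<mxvec (unit_commutator t)>>)%MS.
  exists (fun t => u t 0 0); apply: (can_inj mxvecK); rewrite Wu linear_sum.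
  apply: eq_bigr => t _.
  by rewrite linearZ [u t in LHS]mx11_scalar mul_scalar_mx.
set C := (\sum_t _)%MS; rewrite submxE; apply/eqP/matrixP => i c.
rewrite ord1 [RHS]mxE mxvec_mul_trace.
set Z := \matrix_(a, b) _.
have commZ j : Z *m B j = B j *m Z.
  apply/matrixP => q p.
  have /eqP : mxvec (unit_commutator (j, (p, q))) *m cokermx C == 0.
    by rewrite -submxE (sumsmx_sup (j, (p, q))) // genmxE.
  move=> /(congr1 (fun v : 'rV[k]_(n * n) => v 0 c)).
  rewrite mxvec_mul_trace mxE /unit_commutator /=.
  rewrite mulmxBl raddfB /= -!mulmxA mxtrace_delta_mul mxtrace_mulC -mulmxA.
  by rewrite mxtrace_delta_mul => /eqP; rewrite subr_eq0 => /eqP.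
have [c0 ->] := centraliser_scalar commZ.
by rewrite mul_mx_scalar mxtraceZ trW0 mulr0.
Qed.

Variables (T : pzRingType) (r1 r2 : {additive 'M[k]_n -> T}).
Hypotheses (r1M : forall x y, r1 (x *m y) = r1 x * r1 y)
           (r2M : forall x y, r2 (x *m y) = r2 x * r2 y)
           (r_scalar : forall c, r1 c%:M = r2 c%:M)
           (r_gen : forall i, r1 (B i) = r2 (B i)).

Lemma balance (b Y Z : 'M[k]_n) :
  r1 b = r2 b -> r1 Y * r2 (b *m Z) = r1 (Y *m b) * r2 Z.
Proof. by move=> rb; rewrite r2M r1M -rb mulrA. Qed.

Lemma balance_scale c (Y Z : 'M[k]_n) : r1 Y * r2 (c *: Z) = r1 (c *: Y) * r2 Z.
Proof. by rewrite -mul_scalar_mx balance // mul_mx_scalar. Qed.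

(* Balanced over [B] and the scalars, hence factors through the trace. *)
Definition pairing (p q : 'I_n) (W : 'M[k]_n) : T :=
  \sum_i r1 (delta_mx p i) * r2 (W *m delta_mx i q).

Lemma pairing_is_zmod_morphism p q : zmod_morphism (pairing p q).
Proof.
move=> x y; rewrite /pairing -sumrB.
by apply: eq_bigr => i _; rewrite mulmxBl raddfB mulrBr.
Qed.

HB.instance Definition _ p q :=
  GRing.isZmodMorphism.Build _ _ (pairing p q) (pairing_is_zmod_morphism p q).

Lemma pairing_delta p q a b :
  pairing p q (delta_mx a b) = r1 (delta_mx p b) * r2 (delta_mx a q).
Proof.
rewrite /pairing (bigD1 b) //= mul_delta_mx big1 ?addr0 // => i /negPf bi.
by rewrite mul_delta_mx_cond eq_sym bi mulr0n raddf0 mulr0.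
Qed.

Lemma pairing_scale p q c W : pairing p q (c *: W) = r1 c%:M * pairing p q W.
Proof.
rewrite /pairing mulr_sumr; apply: eq_bigr => i _.
by rewrite -scalemxAl balance_scale -mul_scalar_mx r1M mulrA.
Qed.

Lemma pairing_commute p q b W :
  r1 b = r2 b -> pairing p q (W *m b) = pairing p q (b *m W).
Proof.
move=> rb; rewrite /pairing.
under eq_bigr => i _ do
  rewrite -mulmxA mulmx_delta_mx mulmx_sumr raddf_sum mulr_sumr.
rewrite exchange_big /=; apply: eq_bigr => l _.
rewrite -mulmxA balance // delta_mx_mulmx raddf_sum mulr_suml.
by apply: eq_bigr => i _; rewrite -scalemxAr balance_scale.
Qed.

Lemma pairing_trace0 p q W : \tr W = 0 -> pairing p q W = 0.
Proof.
case/trace0_commutator_combination => u ->.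
rewrite raddf_sum big1 //= => t _.
by rewrite pairing_scale raddfB /= pairing_commute ?r_gen ?subrr ?mulr0.
Qed.

Lemma matrix_dominion : r1 =1 r2.
Proof.
have r1_1 : r1 1%:M = r2 1%:M := r_scalar 1.
have pairing_diag p q : pairing p q (delta_mx q q) = pairing p q (delta_mx p p).
  apply/eqP; rewrite -subr_eq0 -raddfB /= pairing_trace0 //.
  by rewrite raddfB /= !mxtrace_delta !eqxx subrr.
have pairing_offdiag p q a b : a != b -> pairing p q (delta_mx a b) = 0.
  by move=> /negPf ab; rewrite pairing_trace0 // mxtrace_delta ab.
have r_delta p q : r1 (delta_mx p q) = r2 (delta_mx p q).
  transitivity (r1 (delta_mx p q) * r2 1%:M).
    by rewrite -r1_1 -r1M mulmx1.
  transitivity (r1 1%:M * r2 (delta_mx p q)); last by rewrite r1_1 -r2M mul1mx.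
  rewrite mx1_sum_delta !raddf_sum mulr_sumr mulr_suml.
  rewrite (bigD1 q) //= big1 => [|d dq]; last first.
    by rewrite -pairing_delta pairing_offdiag.
  rewrite (bigD1 p) //= [X in _ = _ + X]big1 => [|d dp]; last first.
    by rewrite -pairing_delta pairing_offdiag // eq_sym.
  by rewrite !addr0 -!pairing_delta pairing_diag.
move=> Y; rewrite [Y]matrix_sum_delta !raddf_sum; apply: eq_bigr => p _.
rewrite !raddf_sum; apply: eq_bigr => q _.
by rewrite -!mul_scalar_mx r1M r2M r_scalar r_delta.
Qed.

End MatrixDominion.

Lemma free_alg_subring_full (k : fieldType) (m : nat)
    (S : subringClosed (free_alg k m)) :
    (forall c : k, c%:MP \in S) -> (forall o : 'I_m.-1, << fmu o >> \in S) ->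
  forall x : free_alg k m, x \in S.
Proof.
move=> Sconst Svar x; rewrite [x]monalgE rpred_sum // => mu _.
have -> : << x@_mu *g mu >> = (x@_mu)%:MP * << mu >> :> free_alg k m.
  by rewrite malgM_def fgmulUU mulr1 mul1m.
rewrite rpredM //; case: mu => s; elim: s => [|i s IHs].
  have -> : FMonom [::] = (mone : {fmonom 'I_m.-1}).
    by apply: val_inj; rewrite /= fm1.
  exact: rpred1.
have -> : FMonom (i :: s) = mmul (fmu i) (FMonom s).
  by apply: val_inj; rewrite /= fmM fmU.
have -> : << mmul (fmu i) (FMonom s) >> = << fmu i >> * << FMonom s >>
    :> free_alg k m.
  by rewrite malgM_def fgmulUU mulr1.
exact: rpredM.
Qed.

Section Brick.
Variables (k : fieldType) (V E : finType) (n : nat) (blk : 'I_n -> V)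
  (A : E -> 'M[k]_n).

Definition rep_generator (x : V + E) : 'M[k]_n :=
  match x with inl v => vertex_mx k blk v | inr a => A a end.

Lemma vertex_mx_diag v : vertex_mx k blk v = diag_mx (\row_j (blk j == v)%:R).
Proof.
apply/matrixP => i j; rewrite !mxE.
by case: eqVneq => [->|_]; rewrite ?andbF ?mulr0n // andTb mulr1n.
Qed.

Lemma vertex_mx_sum : \sum_v vertex_mx k blk v = 1%:M.
Proof.
apply/matrixP => i j; rewrite summxE (bigD1 (blk i)) //= big1 ?addr0 => [|v].
  by rewrite !mxE eqxx andbT.
by rewrite eq_sym => /negPf iv; rewrite mxE iv andbF.
Qed.

Lemma brick_centraliser : is_brick blk A -> forall Z : 'M[k]_n,
  (forall x, Z *m rep_generator x = rep_generator x *m Z) -> exists c, Z = c%:M.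
Proof.
move=> brick Z commZ; apply: brick; split=> [i j blk_ij|a]; last first.
  exact: commZ (inr a).
have /matrixP/(_ i j) := commZ (inl (blk j)).
rewrite /= vertex_mx_diag mul_mx_diag mul_diag_mx !mxE eqxx (negPf blk_ij).
by rewrite mulr1 mul0r.
Qed.

End Brick.

Definition corner {k : fieldType} (m : nat) {n : nat} (Y : 'M[k]_n) :
    'M[free_alg k m]_(n + 1) :=
  block_mx (map_mx (@fconst k m) Y) 0 0 0.

Lemma corner_is_zmod_morphism (k : fieldType) m n :
  zmod_morphism (@corner k m n).
Proof.
move=> x y; rewrite /corner /fconst.
by rewrite map_mxB opp_block_mx add_block_mx !oppr0 !addr0.
Qed.

HB.instance Definition _ (k : fieldType) m n :=
  GRing.isZmodMorphism.Build _ _ (@corner k m n)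
    (@corner_is_zmod_morphism k m n).

Lemma corner_mul (k : fieldType) m n (x y : 'M[k]_n) :
  corner m (x *m y) = corner m x * corner m y.
Proof.
by rewrite /corner /fconst -mulmxE mulmx_block !mulmx0 !mul0mx !addr0 map_mxM.
Qed.

Lemma corner_delta (k : fieldType) m n (i j : 'I_n) :
  corner m (delta_mx i j : 'M[k]_n) = delta_mx (lshift 1 i) (lshift 1 j).
Proof.
rewrite /corner delta_mx_ushift delta_mx_lshift /fconst map_delta_mx.
by rewrite /block_mx row_mx0.
Qed.

Lemma Xcol_var (k : fieldType) m n (o : 'I_m.-1) (i : 'I_n) :
  (i : nat) = o.+1 -> Xcol k m n i 0 = << fmu o >>.
Proof.
move=> io; have o_lt := ltn_ord o.
rewrite mxE io /= ifT; last by rewrite -ltn_predRL.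
rewrite /fvar; case: insubP => [o' _ o'E|]; last by rewrite ltn_ord.
by congr << fmu _ >>; apply: val_inj.
Qed.

Section Epimorphism.
Variables (k : fieldType) (V E : finType) (src tgt : E -> V) (n : nat)
  (blk : 'I_n -> V) (A : E -> 'M[k]_n) (w : V) (m : nat).
Hypotheses (brick : is_brick blk A) (n_gt0 : (0 < n)%N) (m_le_n : (m <= n)%N).

Local Notation S := 'M[free_alg k m]_(n + 1).
Local Notation gv := (@g_vertex k V m n blk).
Local Notation ge := (@g_arrow k V E m n A).
Local Notation gs := (@g_scalar k m n).
Local Notation L i := (lshift 1 i).
Local Notation R := (rshift n (ord0 : 'I_1)).

Variables (T : pzRingType) (r1 r2 : {rmorphism S -> T}).
Hypothesis r_img : forall x, path_alg_image (src' src) (tgt' tgt w)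
  gs gv ge x -> r1 x = r2 x.

Local Notation D := (equalizer r1 r2).

Lemma g_scalar1 : gs 1 = 1.
Proof. by rewrite /g_scalar /fconst mpolyC1E. Qed.

Lemma path_in_D c v s : qpath_ok (src' src) (tgt' tgt w) v s ->
  gs c * path_img gv ge v s \in D.
Proof.
move=> ok; rewrite inE; apply/eqP/r_img; exists [:: (c, (v, s))].
by rewrite /= ok big_seq1.
Qed.

Lemma g_vertex_in_D v : gv v \in D.
Proof.
by have := path_in_D 1 (s := [::]) (v := v) isT; rewrite g_scalar1 mul1r.
Qed.

Lemma g_arrow_in_D a : ge a \in D.
Proof.
have := path_in_D 1 (s := [:: a]) (v := src' src a).
by rewrite /= eqxx g_scalar1 !mul1r; apply.
Qed.

Lemma corner1 : corner m (1%:M : 'M[k]_n) = \sum_u gv (Some u).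
Proof. by rewrite -(vertex_mx_sum k blk) raddf_sum. Qed.

Lemma g_vertex_sum : gv None + \sum_u gv (Some u) = 1.
Proof.
rewrite -corner1 /corner /= add_block_mx !addr0 add0r /fconst map_mx1.
by rewrite -scalar_mx_block.
Qed.

Lemma g_scalar_in_D c : gs c \in D.
Proof.
rewrite -[gs _]mulr1 -g_vertex_sum mulrDr mulr_sumr.
apply: rpredD; first exact: (path_in_D c (v := None) (s := [::]) isT).
by apply: rpred_sum => u _; exact: (path_in_D c (v := Some u) (s := [::]) isT).
Qed.

Lemma corner_scalar_in_D c : corner m (c%:M : 'M[k]_n) \in D.
Proof.
have -> : corner m c%:M = gs c * corner m 1%:M.
  rewrite /corner /g_scalar -mulmxE mul_scalar_mx scale_block_mx !scaler0.
  by rewrite /fconst !map_scalar_mx scalemx1.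
rewrite rpredM ?g_scalar_in_D // corner1.
by apply: rpred_sum => u _; exact: g_vertex_in_D.
Qed.

Lemma corner_in_D Y : corner m Y \in D.
Proof.
pose r1c : {additive 'M[k]_n -> T} := r1 \o corner m.
pose r2c : {additive 'M[k]_n -> T} := r2 \o corner m.
apply/eqP; apply: (matrix_dominion (brick_centraliser brick) (r1 := r1c)
  (r2 := r2c)).
- by move=> x y /=; rewrite corner_mul rmorphM.
- by move=> x y /=; rewrite corner_mul rmorphM.
- by move=> c; apply/eqP/corner_scalar_in_D.
- case=> [v|a]; apply/eqP; first exact: (g_vertex_in_D (Some v)).
  exact: (g_arrow_in_D (Some a)).
Qed.

Lemma delta_in_D a b : delta_mx a b \in D.
Proof.
pose i0 := Ordinal n_gt0.
have DLL i j : delta_mx (L i) (L j) \in D by rewrite -corner_delta corner_in_D.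
have DRR : delta_mx R R \in D.
  suff <- : gv None = delta_mx R R by exact: g_vertex_in_D.
  rewrite /g_vertex delta_mx_dshift delta_mx_rshift /block_mx row_mx0.
  by congr (col_mx 0 (row_mx 0 _)); apply/matrixP => x y; rewrite !ord1 !mxE.
have DLR : delta_mx (L i0) R \in D.
  have := delta_mx_sandwich (L i0) (L i0) R R (ge None).
  rewrite [ge None _ _]block_mxEur mxE scale1r => <-.
  by rewrite rpredM ?rpredM ?DLL ?DRR ?g_arrow_in_D.
have DRL : delta_mx R (L i0) \in D.
  by apply: (equalizer_zigzag _ DLR); rewrite -!mulmxE !mul_delta_mx.
have -> : delta_mx a b = delta_mx a (L i0) *m delta_mx (L i0) b :> S.
  by rewrite mul_delta_mx.
rewrite mulmxE rpredM //.
  by rewrite -(splitK a); case: (split a) => a' /=; rewrite ?DLL // (ord1 a').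
by rewrite -(splitK b); case: (split b) => b' /=; rewrite ?DLL // (ord1 b').
Qed.

Lemma var_in_D (o : 'I_m.-1) : (<< fmu o >> : free_alg k m)%:M \in D.
Proof.
have o_lt_n : (o.+1 < n)%N by rewrite (leq_trans _ m_le_n) // -ltn_predRL.
pose j := Ordinal o_lt_n.
have <- : ge None (L j) R = << fmu o >>.
  by rewrite [ge None _ _]block_mxEur (@Xcol_var k m n o j).
rewrite -(sum_delta_mx_sandwich (L j) R (ge None)); apply: rpred_sum => a _.
by rewrite !mulmxE !rpredM ?delta_in_D ?g_arrow_in_D.
Qed.

Lemma scalar_in_D (x : free_alg k m) : x%:M \in D.
Proof.
have := @free_alg_subring_full k m
  (equalizer (r1 \o scalar_mx) (r2 \o scalar_mx)).
apply=> [c|o]; [exact: g_scalar_in_D | exact: var_in_D].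
Qed.

Lemma all_in_D (y : S) : y \in D.
Proof.
rewrite [y]matrix_sum_delta; apply: rpred_sum => a _; apply: rpred_sum => b _.
by rewrite -mul_scalar_mx mulmxE rpredM ?scalar_in_D ?delta_in_D.
Qed.

End Epimorphism.

Theorem mainTheorem14 (k : closedFieldType) (V E : finType) (src tgt : E -> V)
    (n : nat) (blk : 'I_n -> V) (A : E -> 'M[k]_n) (w : V) (m : nat) :
  acyclic_quiver src tgt ->
  rep_matrices src tgt blk A ->
  is_brick blk A ->
  (1 < m)%N -> (m <= n)%N ->
  (forall i : 'I_n, (blk i == w) = ((i : nat) < m)%N) ->
  ring_epi_image
    (path_alg_image (src' src) (tgt' tgt w)
       (@g_scalar k m n) (@g_vertex k V m n blk) (@g_arrow k V E m n A)).
Proof.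
move=> _ _ brick m_gt1 m_le_n _ T r1 r2 r_img y.
have n_gt0 : (0 < n)%N by rewrite (leq_trans _ m_le_n) // ltnW.
exact/eqP/(all_in_D brick n_gt0 m_le_n r_img).
Qed.
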